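(* For every integer $n\ge 3$, $\chi_{ei}(W_n)=n+1$.
   Context: All graphs are finite and simple. The wheel $W_n$ is the graph on $n+1$ vertices obtained from the cycle $C_n$ by adding one new vertex adjacent to all vertices of the cycle. A path $P_4$ in $G$ is a sequence $uxyv$ of four distinct vertices with $ux,xy,yv\in E(G)$; $u,v$ are its end vertices. An $e$-injective $k$-coloring of $G$ is a function $f:V(G)\to\{1,\dots,k\}$ with $f(u)\ne f(v)$ whenever $u,v$ are the end vertices of some path $P_4$ in $G$; $\chi_{ei}(G)$ is the least such $k$. *)

From mathcomp Require Import all_boot.
Set Implicit Arguments. Unset Strict Implicit. Unset Printing Implicit Defensive.

Definition simple_graph (T : finType) (e : rel T) : Prop :=
  irreflexive e /\ symmetric e.

Definition is_P4 (T : finType) (e : rel T) (u x y v : T) : bool :=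
  [&& uniq [:: u; x; y; v], e u x, e x y & e y v].

Definition ei_coloring (T : finType) (e : rel T) (k : nat) (f : T -> 'I_k) : bool :=
  [forall u, forall x, forall y, forall v, is_P4 e u x y v ==> (f u != f v)].

Definition has_ei_coloring (T : finType) (e : rel T) (k : nat) : bool :=
  [exists f : {ffun T -> 'I_k}, ei_coloring e f].

Lemma has_ei_coloring_card (T : finType) (e : rel T) :
  exists k, has_ei_coloring e k.
Proof.
exists #|T|; apply/existsP; exists [ffun x => enum_rank x].
apply/forallP=> u; apply/forallP=> x; apply/forallP=> y; apply/forallP=> v.
apply/implyP=> /andP [Hu _]; rewrite !ffunE.
apply/negP=> /eqP /enum_rank_inj Huv; move: Hu; rewrite Huv /=.
by rewrite !inE eqxx !orbT.
Qed.

Definition chi_ei (T : finType) (e : rel T) : nat :=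
  ex_minn (has_ei_coloring_card e).

Definition cycle_adj (n i j : nat) : bool :=
  (i != j) && ((j == (i.+1 %% n)) || (i == (j.+1 %% n))).

(* Wheel W_n on 'I_n.+1: vertices 0..n-1 form C_n, vertex n is the hub
   adjacent to every cycle vertex. *)
Definition wheel (n : nat) : rel (ordinal n.+1) :=
  fun i j => if (i < n) && (j < n) then cycle_adj n i j else i != j.
Arguments wheel n : clear implicits.

(* In W_n with n >= 3 any two distinct vertices are the end vertices of some
   P4: a rim vertex b is reached from the hub along the rim path through its
   next two successors, and two rim vertices a, b can be joined through the
   hub as a, hub, b+1, b unless b+1 = a, in which case a+1 <> b and we join
   b to a instead.  Hence every e-injective coloring of W_n is injective, so
   it needs all n+1 colors, while any injective coloring is e-injective. *)
From mathcomp Require Import all_boot zify.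
Set Implicit Arguments.
Unset Strict Implicit.
Unset Printing Implicit Defensive.

Section EInjectiveColoring.
Variables (T : finType) (e : rel T).

Definition P4_connected : Prop :=
  forall u v : T, u != v -> exists x y, is_P4 e u x y v.

Lemma is_P4_rev u x y v : symmetric e -> is_P4 e u x y v -> is_P4 e v y x u.
Proof.
move=> e_sym /and4P [uniq_uxyv e_ux e_xy e_yv].
rewrite /is_P4 (_ : [:: v; y; x; u] = rev [:: u; x; y; v]) // rev_uniq.
by rewrite uniq_uxyv e_sym e_yv e_sym e_xy e_sym.
Qed.

Lemma ei_coloring_ends_neq k (f : T -> 'I_k) u x y v :
  ei_coloring e f -> is_P4 e u x y v -> f u != f v.
Proof.
by move=> /forallP /(_ u) /forallP /(_ x) /forallP /(_ y) /forallP /(_ v) /implyP.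
Qed.

Lemma inj_ei_coloring k (f : T -> 'I_k) : injective f -> ei_coloring e f.
Proof.
move=> f_inj; apply/forallP=> u; apply/forallP=> x; apply/forallP=> y.
apply/forallP=> v; apply/implyP=> /and4P [uniq_uxyv _ _ _].
rewrite (inj_eq f_inj); apply: contraTneq uniq_uxyv => ->.
by rewrite /= !inE eqxx !orbT.
Qed.

Lemma has_ei_coloring_card : has_ei_coloring e #|T|.
Proof.
apply/existsP; exists [ffun x => enum_rank x].
by apply: inj_ei_coloring => u v; rewrite !ffunE => /enum_rank_inj.
Qed.

Lemma P4_connected_ei_coloring_inj k (f : T -> 'I_k) :
  P4_connected -> ei_coloring e f -> injective f.
Proof.
move=> P4e f_ei u v fu_fv; apply/eqP; apply: contraT => u_neq_v.
have [x [y P4uv]] := P4e u v u_neq_v.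
by move: (ei_coloring_ends_neq f_ei P4uv); rewrite fu_fv eqxx.
Qed.

Lemma chi_ei_P4_connected : P4_connected -> chi_ei e = #|T|.
Proof.
rewrite /chi_ei => P4e; case: ex_minnP => k /existsP [f f_ei] k_min.
apply/anti_leq; rewrite k_min ?has_ei_coloring_card //=.
by rewrite -[k]card_ord; apply/leq_card/(P4_connected_ei_coloring_inj P4e f_ei).
Qed.

End EInjectiveColoring.

Section Wheel.
Variable n : nat.
Hypothesis n_ge3 : 3 <= n.

Let hub : 'I_n.+1 := ord_max.

Lemma cycle_adj_sym : symmetric (cycle_adj n).
Proof. by move=> i j; rewrite /cycle_adj eq_sym orbC. Qed.

Lemma wheel_sym : symmetric (wheel n).
Proof. by move=> i j; rewrite /wheel cycle_adj_sym andbC eq_sym. Qed.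

Definition rim_succ (i : 'I_n.+1) : 'I_n.+1 := inord (i.+1 %% n).

Lemma rim_succ_mod (i : 'I_n.+1) : rim_succ i = i.+1 %% n :> nat.
Proof. by rewrite inordK // ltnS ltnW // ltn_mod; lia. Qed.

Lemma rim_succE (i : 'I_n.+1) :
  i < n -> rim_succ i = (if i.+1 == n then 0 else i.+1) :> nat.
Proof.
move=> i_lt_n; rewrite rim_succ_mod.
by case: eqP => [->|?]; rewrite ?modnn // modn_small //; lia.
Qed.

Lemma rim_succ_lt (i : 'I_n.+1) : i < n -> rim_succ i < n.
Proof. by move=> i_lt_n; rewrite rim_succE //; case: (eqVneq i.+1 n); lia. Qed.

Lemma rim_succ_neq (i : 'I_n.+1) : i < n -> rim_succ i != i.
Proof.
by move=> i_lt_n; rewrite -val_eqE /= rim_succE //; case: (eqVneq i.+1 n); lia.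
Qed.

Lemma rim_succ2_neq (i : 'I_n.+1) : i < n -> rim_succ (rim_succ i) != i.
Proof.
move=> i_lt_n; have := rim_succ_lt i_lt_n => /rim_succE.
rewrite -val_eqE /= => ->; rewrite rim_succE //.
by case: (eqVneq i.+1 n) => ?; [case: (eqVneq 1 n) | case: (eqVneq i.+2 n)]; lia.
Qed.

Lemma hub_or_rim (i : 'I_n.+1) : i = hub \/ i < n.
Proof.
case: (ltnP i n) => [|i_ge_n]; [by right | left].
by apply/val_inj => /=; have := ltn_ord i; lia.
Qed.

Lemma hub_neq (i : 'I_n.+1) : i < n -> hub != i.
Proof. by move=> i_lt_n; rewrite -val_eqE /=; lia. Qed.

Lemma wheel_hub (i : 'I_n.+1) : i < n -> wheel n hub i.
Proof. by move=> i_lt_n; rewrite /wheel /= ltnn hub_neq. Qed.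

Lemma wheel_rim_succ (i : 'I_n.+1) : i < n -> wheel n i (rim_succ i).
Proof.
move=> i_lt_n; rewrite /wheel /cycle_adj i_lt_n rim_succ_lt //=.
by rewrite eq_sym rim_succ_neq // rim_succ_mod eqxx.
Qed.

Lemma wheel_P4_hub (b : 'I_n.+1) :
  b < n -> is_P4 (wheel n) hub (rim_succ (rim_succ b)) (rim_succ b) b.
Proof.
move=> b_lt_n; have sb_lt_n := rim_succ_lt b_lt_n.
rewrite /is_P4 /= !inE !negb_or !hub_neq ?rim_succ_lt //.
rewrite rim_succ_neq // rim_succ2_neq // rim_succ_neq // wheel_hub ?rim_succ_lt //.
by rewrite wheel_sym wheel_rim_succ // wheel_sym wheel_rim_succ.
Qed.

Lemma wheel_P4_rim (a b : 'I_n.+1) : a < n -> b < n -> a != b ->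
  rim_succ b != a -> is_P4 (wheel n) a hub (rim_succ b) b.
Proof.
move=> a_lt_n b_lt_n a_neq_b sb_neq_a; have sb_lt_n := rim_succ_lt b_lt_n.
rewrite /is_P4 /= !inE !negb_or a_neq_b ![a == _]eq_sym !hub_neq // sb_neq_a.
rewrite rim_succ_neq // wheel_hub // wheel_sym wheel_hub //.
by rewrite wheel_sym wheel_rim_succ.
Qed.

Lemma wheel_P4_connected : P4_connected (wheel n).
Proof.
have P4_sym u v : (exists x y, is_P4 (wheel n) u x y v) ->
    exists x y, is_P4 (wheel n) v x y u.
  by case=> x [y /(is_P4_rev wheel_sym) P4vu]; exists y, x.
move=> a b a_neq_b.
case: (hub_or_rim a) => [a_hub | a_lt_n].
  case: (hub_or_rim b) => [b_hub | b_lt_n].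
    by rewrite a_hub b_hub eqxx in a_neq_b.
  by rewrite a_hub; exists (rim_succ (rim_succ b)), (rim_succ b); apply: wheel_P4_hub.
case: (hub_or_rim b) => [-> | b_lt_n].
  by apply: P4_sym; exists (rim_succ (rim_succ a)), (rim_succ a); apply: wheel_P4_hub.
case: (eqVneq (rim_succ b) a) => [sb_eq_a | sb_neq_a].
  apply: P4_sym; exists hub, (rim_succ a).
  apply: wheel_P4_rim => //; first by rewrite eq_sym.
  by rewrite -sb_eq_a rim_succ2_neq.
by exists hub, (rim_succ b); apply: wheel_P4_rim.
Qed.
End Wheel.

Theorem proposition3p4 (n : nat) : 3 <= n -> chi_ei (wheel n) = n.+1.
Proof.
by move=> n_ge3; rewrite chi_ei_P4_connected ?card_ord //; apply: wheel_P4_connected.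
Qed.
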